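(* Let $\Sigma\in\mathbb{R}^{n\times n}$ be a symmetric positive definite matrix with eigenvalues $\lambda_1,\ldots,\lambda_n$, $\lambda_{\min}=\min_i\lambda_i$, $\lambda_{\mathrm{mean}}=\mathrm{tr}(\Sigma)/n$. For $0<D\le\mathrm{tr}(\Sigma)$ let $L>0$ satisfy $\sum_{i=1}^n\min\{L,\lambda_i\}=D$, $D_i=\min\{L,\lambda_i\}$, and $R(D)=\sum_{i=1}^n\frac12\log\frac{\lambda_i}{D_i}$. For $\alpha\in[0,1]$, $D>0$ let $R_\alpha(D)=\frac12\log\det\big(\alpha I+\frac{n}{D}\Sigma\big)$, and let $\alpha^*\in[0,1]$ be the unique value with $R_{\alpha^*}(\mathrm{tr}(\Sigma))=0$. Then $\lim_{D\to0^+}\big(R_{\alpha^*}(D)-R(D)\big)=0$, $R_{\alpha^*}(\mathrm{tr}(\Sigma))=R(\mathrm{tr}(\Sigma))=0$, and for every $D\in(0,\mathrm{tr}(\Sigma)]$, $$\frac12\log\frac{\lambda_{\min}}{\lambda_{\mathrm{mean}}}\le\frac{R_{\alpha^*}(D)-R(D)}{n}\le\frac12\log\Big(2-\frac{\lambda_{\min}}{\lambda_{\mathrm{mean}}}\Big).$$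
   Context: $\log$ denotes the logarithm to a fixed base greater than $1$. $R(D)$ is the mean-square-distortion rate-distortion function of an $n$-dimensional Gaussian vector with covariance $\Sigma$ (reverse water-filling); $I$ is the $n\times n$ identity matrix. *)

From HB Require Import structures.
From mathcomp Require Import all_boot all_order all_algebra.
From mathcomp Require Import all_classical all_reals all_analysis.
Set Implicit Arguments. Unset Strict Implicit. Unset Printing Implicit Defensive.
Import Order.TTheory GRing.Theory Num.Theory.
Local Open Scope ring_scope.

Section Defs.
Variable R : realType.

Definition logb (b x : R) : R := ln x / ln b.

Definition sym_posdef n (S : 'M[R]_n) : Prop :=
  S^T = S /\ forall x : 'rV[R]_n, x != 0 -> 0 < (x *m S *m x^T) 0 0.

(* lam lists the eigenvalues of S with multiplicity *)
Definition eigenvalues_of n (S : 'M[R]_n) (lam : 'I_n -> R) : Prop :=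
  char_poly S = \prod_(i < n) ('X - (lam i)%:P).

Definition lam_min n (lam : 'I_n.+1 -> R) : R :=
  \big[Num.min/lam ord0]_(i < n.+1) lam i.

Definition R_alpha (b : R) n (S : 'M[R]_n) (alpha D : R) : R :=
  1/2 * logb b (\det (alpha%:M + (n%:R / D) *: S)).

(* reverse water-filling rate at water level L *)
Definition R_wf (b : R) n (lam : 'I_n -> R) (L : R) : R :=
  \sum_(i < n) 1/2 * logb b (lam i / Num.min L (lam i)).
End Defs.

From HB Require Import structures.
From mathcomp Require Import all_boot all_order all_algebra.
From mathcomp Require Import all_classical all_reals all_analysis.
From mathcomp Require Import ring lra.
Set Implicit Arguments. Unset Strict Implicit. Unset Printing Implicit Defensive.
Import Order.TTheory GRing.Theory Num.Theory.
Local Open Scope ring_scope.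
Local Open Scope classical_set_scope.

(* Write N = n + 1 and D_i = min(L, lam_i).  The rate gap R_a(D) - R(D) is
   (1/2) sum_i log x_i with x_i = (a + N lam_i / D) D_i / lam_i.  The
   water-filling shares satisfy D_i / D >= lam_min / tr S, so every x_i is at
   least r = lam_min / lam_mean, while sum_i x_i <= N (a + 1).  The condition
   R_a(tr S) = 0 forces a + r <= 1, so concavity of log bounds sum_i log x_i by
   N log (2 - r).  Below D = N lam_min the water level is D / N, hence
   x_i = 1 + a D / (N lam_i) and the gap is O(D). *)

Lemma sumr_const_ord (R : pzSemiRingType) n (x : R) : \sum_(i < n) x = x * n%:R.
Proof. by rewrite sumr_const card_ord mulr_natr. Qed.

Lemma horner_char_poly (R : comNzRingType) n (A : 'M[R]_n) (y : R) :
  (char_poly A).[y] = \det (y%:M - A).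
Proof.
rewrite -horner_evalE -det_map_mx; congr (\det _); apply/matrixP => i j.
by rewrite !mxE raddfB /= !horner_evalE hornerMn hornerX hornerC.
Qed.

Lemma det_scalar_add_scale (F : fieldType) n (A : 'M[F]_n) (lam : 'I_n -> F)
    (x c : F) :
  char_poly A = \prod_(i < n) ('X - (lam i)%:P) -> c != 0 ->
  \det (x%:M + c *: A) = \prod_(i < n) (x + c * lam i).
Proof.
move=> charA c0.
have -> : x%:M + c *: A = (- c) *: ((- x / c)%:M - A).
  by rewrite scalerBr scale_scalar_mx scaleNr opprK; congr (_%:M + _); field.
rewrite detZ -horner_char_poly charA horner_prod.
have -> : (- c) ^+ n = \prod_(i < n) (- c) by rewrite prodr_const card_ord.
by rewrite -big_split /=; apply: eq_bigr => i _; rewrite hornerXsubC; field.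
Qed.

Lemma trace_eigen (R : comNzRingType) n (A : 'M[R]_n) (lam : 'I_n -> R) :
  char_poly A = \prod_(i < n) ('X - (lam i)%:P) -> \tr A = \sum_(i < n) lam i.
Proof.
case: n A lam => [|n] A lam charA; first by rewrite big_ord0 /mxtrace big_ord0.
apply: oppr_inj; rewrite -char_poly_trace // charA.
have := @coefPn_prod_XsubC R [seq lam i | i <- index_enum 'I_n.+1].
by rewrite !big_map size_map /index_enum /= -enumT size_enum_ord => ->.
Qed.

Lemma posdef_eigen_gt0 (R : realType) n (S : 'M[R]_n) (lam : 'I_n -> R) :
  sym_posdef S -> eigenvalues_of S lam -> forall i, 0 < lam i.
Proof.
move=> [_ S_pos] charS i.
have /eigenvalueP[v Sv v0] : eigenvalue S (lam i).
  by rewrite eigenvalue_root_char /root charS horner_prod (bigD1 i) //= hornerXsubC subrr mul0r.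
have := S_pos v v0; rewrite Sv -scalemxAl mxE.
suff vv_gt0 : 0 < (v *m v^T) 0 0 by rewrite pmulr_lgt0.
have vv_ge0 j : true -> 0 <= v 0 j * v^T j 0 by rewrite mxE -expr2 sqr_ge0.
rewrite mxE lt_def sumr_ge0 // andbT; apply: contra v0 => /eqP/psumr_eq0P vv0.
apply/eqP/rowP => j; apply/eqP; rewrite mxE -sqrf_eq0 expr2.
by have := vv0 vv_ge0 j isT; rewrite mxE => ->.
Qed.

Section Logarithm.
Variable R : realType.

Lemma ln_prod (I : Type) (r : seq I) (P : pred I) (F : I -> R) :
  (forall i, P i -> 0 < F i) ->
  ln (\prod_(i <- r | P i) F i) = \sum_(i <- r | P i) ln (F i).
Proof.
move=> F_gt0.
suff [] : 0 < \prod_(i <- r | P i) F i /\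
          ln (\prod_(i <- r | P i) F i) = \sum_(i <- r | P i) ln (F i) by [].
apply: (big_rec2 (fun p s => 0 < p /\ ln p = s)); first by rewrite ln1.
move=> i p s Pi [p_gt0 <-]; split; first by rewrite mulr_gt0 ?F_gt0.
by rewrite lnM ?posrE ?F_gt0.
Qed.

Lemma ln_le_tangent (x M : R) : 0 < x -> 0 < M -> ln x <= ln M + (x / M - 1).
Proof.
move=> x_gt0 M_gt0; have : -1 < x / M - 1 by rewrite ltrBrDr addNr divr_gt0.
by move/le_ln1Dx; rewrite addrC subrK ln_div //; lra.
Qed.

Lemma sum_ln_le n (x : 'I_n -> R) (M : R) : 0 < M -> (forall i, 0 < x i) ->
  \sum_(i < n) x i <= n%:R * M -> \sum_(i < n) ln (x i) <= n%:R * ln M.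
Proof.
move=> M_gt0 x_gt0 sum_le.
apply: (@le_trans _ _ (\sum_(i < n) (ln M + (x i / M - 1)))).
  by apply: ler_sum => i _; apply: ln_le_tangent.
rewrite big_split sumrB /= -mulr_suml !sumr_const_ord.
have : (\sum_(i < n) x i) / M <= n%:R by rewrite ler_pdivrMr.
lra.
Qed.
End Logarithm.

Section WaterFilling.
Variables (R : realType) (n : nat) (lam : 'I_n.+1 -> R).
Hypothesis lam_gt0 : forall i, 0 < lam i.

Lemma lam_min_le i : lam_min lam <= lam i.
Proof. by rewrite /lam_min (bigD1 i) //= ge_min lexx. Qed.

Lemma lam_min_gt0 : 0 < lam_min lam.
Proof. by apply: (big_ind (fun x => 0 < x)) => // x y x0 y0; rewrite lt_min x0. Qed.

Lemma lam_min_mul_le_sum : lam_min lam * n.+1%:R <= \sum_i lam i.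
Proof.
by rewrite -sumr_const_ord; apply: ler_sum => i _; exact: lam_min_le.
Qed.

Lemma water_level_below L : L <= lam_min lam -> forall i, Num.min L (lam i) = L.
Proof. by move=> L_le i; apply/min_l/(le_trans L_le)/lam_min_le. Qed.

Lemma water_level_full L :
  \sum_i Num.min L (lam i) = \sum_i lam i -> forall i, Num.min L (lam i) = lam i.
Proof.
move=> sum_eq i; apply/eqP; rewrite eq_sym -subr_eq0; apply/eqP; move: i isT.
apply: psumr_eq0P => [j _|]; first by rewrite subr_ge0 ge_min lexx orbT.
by rewrite sumrB sum_eq subrr.
Qed.

Lemma water_level_low L D : D < lam_min lam * n.+1%:R ->
  \sum_i Num.min L (lam i) = D -> forall i, Num.min L (lam i) = D / n.+1%:R.
Proof.
move=> D_lt sum_eq i; have [L_le|L_gt] := leP L (lam_min lam).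
  rewrite -sum_eq (eq_bigr _ (fun j _ => water_level_below L_le j)).
  by rewrite water_level_below // sumr_const_ord mulfK.
suff : lam_min lam * n.+1%:R <= D by rewrite leNgt D_lt.
rewrite -sum_eq -sumr_const_ord; apply: ler_sum => j _.
by rewrite le_min (ltW L_gt) lam_min_le.
Qed.

Lemma water_share_ge L i : 0 <= L ->
  lam_min lam * \sum_j Num.min L (lam j) <= Num.min L (lam i) * \sum_j lam j.
Proof.
move=> L_ge0; have m_gt0 := lam_min_gt0.
have T_ge0 : 0 <= \sum_j lam j by apply: sumr_ge0 => j _; exact: ltW.
have [L_le|L_gt] := leP L (lam_min lam).
  rewrite (eq_bigr _ (fun j _ => water_level_below L_le j)) water_level_below //.
  rewrite sumr_const_ord mulrCA ler_wpM2l //.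
  exact: lam_min_mul_le_sum.
apply: (@le_trans _ _ (lam_min lam * \sum_j lam j)).
  by apply/ler_wpM2l/ler_sum => [|j _]; rewrite ?ge_min ?lexx ?orbT ?ltW.
by rewrite ler_wpM2r // le_min (ltW L_gt) lam_min_le.
Qed.

Lemma R_wf_full b L :
  \sum_i Num.min L (lam i) = \sum_i lam i -> R_wf b lam L = 0.
Proof.
move=> sum_eq; apply: big1 => i _.
by rewrite water_level_full // divff ?gt_eqF // /logb ln1 mul0r mulr0.
Qed.
End WaterFilling.

Section RateGap.
Variables (R : realType) (n : nat) (S : 'M[R]_n.+1) (lam : 'I_n.+1 -> R).
Hypotheses (S_eig : eigenvalues_of S lam) (lam_gt0 : forall i, 0 < lam i).

Definition gap_ratio (a D L : R) i :=
  (a + n.+1%:R / D * lam i) * Num.min L (lam i) / lam i.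

Lemma R_alpha_eigen b a D : 0 <= a -> 0 < D ->
  R_alpha b S a D = (\sum_i ln (a + n.+1%:R / D * lam i)) / (2 * ln b).
Proof.
move=> a_ge0 D_gt0; have c_gt0 : 0 < n.+1%:R / D by rewrite divr_gt0.
rewrite /R_alpha /logb (det_scalar_add_scale _ S_eig) ?gt_eqF // ln_prod.
  by rewrite invfM; ring.
by move=> i _; rewrite ltr_wpDl // mulr_gt0.
Qed.

Lemma R_alpha_sub_R_wf b a D L : 0 <= a -> 0 < D -> 0 < L ->
  R_alpha b S a D - R_wf b lam L = (\sum_i ln (gap_ratio a D L i)) / (2 * ln b).
Proof.
move=> a_ge0 D_gt0 L_gt0; rewrite R_alpha_eigen // /R_wf /logb mulr_suml -sumrB.
rewrite mulr_suml; apply: eq_bigr => i _.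
have x_gt0 : 0 < a + n.+1%:R / D * lam i by rewrite ltr_wpDl // mulr_gt0 ?divr_gt0.
have m_gt0 : 0 < Num.min L (lam i) by rewrite lt_min L_gt0 lam_gt0.
by rewrite /gap_ratio !ln_div ?lnM ?posrE ?mulr_gt0 // invfM; ring.
Qed.

Lemma trace_gt0 : 0 < \tr S.
Proof.
rewrite (trace_eigen S_eig) (lt_le_trans _ (lam_min_mul_le_sum lam)) //.
by rewrite mulr_gt0 ?lam_min_gt0.
Qed.

Lemma alpha_add_ratio_le b a : 1 < b -> 0 <= a -> R_alpha b S a (\tr S) = 0 ->
  a + lam_min lam / (\tr S / n.+1%:R) <= 1.
Proof.
move=> b_gt1 a_ge0; rewrite R_alpha_eigen ?trace_gt0 //; set r := lam_min lam / _.
have c_gt0 : 0 < n.+1%:R / \tr S by rewrite divr_gt0 ?trace_gt0.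
have r_gt0 : 0 < r by rewrite /r invf_div mulr_gt0 ?lam_min_gt0.
have r_le i : a + r <= a + n.+1%:R / \tr S * lam i.
  by rewrite lerD2l /r invf_div mulrC ler_wpM2l ?lam_min_le ?ltW.
move=> sum_eq0; rewrite leNgt; apply/negP => ar_gt1; move: sum_eq0; apply/eqP.
rewrite gt_eqF // divr_gt0 ?mulr_gt0 ?ln_gt0 //.
apply: (@lt_le_trans _ _ (\sum_(i < n.+1) ln (a + r))).
  by rewrite sumr_const_ord mulr_gt0 ?ln_gt0.
have ar_gt0 : 0 < a + r by rewrite ltr_wpDl.
by apply: ler_sum => i _; rewrite ler_ln ?posrE ?r_le // (lt_le_trans ar_gt0 (r_le i)).
Qed.

Lemma gap_ratioE a D L i :
  gap_ratio a D L i = a * (Num.min L (lam i) / lam i) + n.+1%:R / D * Num.min L (lam i).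
Proof. by rewrite /gap_ratio !mulrDl -mulrA (mulrAC _ (lam i)) mulfK ?gt_eqF. Qed.

Lemma gap_ratio_ge a D L i : 0 <= a -> 0 < D -> 0 <= L ->
  \sum_j Num.min L (lam j) = D ->
  lam_min lam / (\tr S / n.+1%:R) <= gap_ratio a D L i.
Proof.
move=> a_ge0 D_gt0 L_ge0 sumD.
have m_ge0 : 0 <= Num.min L (lam i) by rewrite le_min L_ge0 ltW.
rewrite gap_ratioE ler_wpDl //; first by rewrite mulr_ge0 // divr_ge0 // ltW.
have := water_share_ge lam_gt0 i L_ge0; rewrite sumD -(trace_eigen S_eig) => share.
rewrite -(ler_pM2r (mulr_gt0 D_gt0 trace_gt0)).
have -> : lam_min lam / (\tr S / n.+1%:R) * (D * \tr S) = n.+1%:R * (lam_min lam * D).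
  by field; rewrite !gt_eqF ?trace_gt0.
have -> : n.+1%:R / D * Num.min L (lam i) * (D * \tr S) =
          n.+1%:R * (Num.min L (lam i) * \tr S) by field; rewrite gt_eqF.
by rewrite ler_wpM2l.
Qed.

Lemma sum_gap_ratio_le a D L : 0 <= a -> 0 < D -> 0 < L ->
  \sum_i Num.min L (lam i) = D -> \sum_i gap_ratio a D L i <= n.+1%:R * (a + 1).
Proof.
move=> a_ge0 D_gt0 L_gt0 sumD.
apply: (@le_trans _ _ (\sum_i (a + n.+1%:R / D * Num.min L (lam i)))).
  apply: ler_sum => i _; rewrite gap_ratioE lerD2r ler_piMr //.
  by rewrite ler_pdivrMr // mul1r ge_min lexx orbT.
rewrite big_split /= -mulr_sumr sumD sumr_const_ord divfK ?gt_eqF //.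
by rewrite mulrDr mulr1 mulrC.
Qed.

Lemma gap_ratio_low a D L i : 0 < D -> D < lam_min lam * n.+1%:R ->
  \sum_j Num.min L (lam j) = D -> gap_ratio a D L i = 1 + a * D / (n.+1%:R * lam i).
Proof.
move=> D_gt0 D_lt sumD; rewrite /gap_ratio (water_level_low D_lt sumD).
by field; rewrite !gt_eqF.
Qed.

Lemma rate_gap_bounds b a D L : 1 < b -> 0 <= a ->
  a + lam_min lam / (\tr S / n.+1%:R) <= 1 ->
  0 < D -> 0 < L -> \sum_i Num.min L (lam i) = D ->
  1/2 * logb b (lam_min lam / (\tr S / n.+1%:R))
    <= (R_alpha b S a D - R_wf b lam L) / n.+1%:R
  /\ (R_alpha b S a D - R_wf b lam L) / n.+1%:R
    <= 1/2 * logb b (2 - lam_min lam / (\tr S / n.+1%:R)).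
Proof.
move=> b_gt1 a_ge0; set r := lam_min lam / _ => ar_le D_gt0 L_gt0 sumD.
have r_gt0 : 0 < r by rewrite divr_gt0 ?divr_gt0 ?lam_min_gt0 ?trace_gt0.
have ratio_ge i := gap_ratio_ge i a_ge0 D_gt0 (ltW L_gt0) sumD.
have lnb_gt0 : 0 < ln b by rewrite ln_gt0.
have scale y : 1/2 * logb b y = n.+1%:R * ln y / (2 * ln b) / n.+1%:R.
  by rewrite /logb; field; rewrite addrC natr1 pnatr_eq0 (gt_eqF lnb_gt0).
rewrite R_alpha_sub_R_wf // !scale !ler_pM2r ?invr_gt0 ?mulr_gt0 //; split.
  rewrite mulrC -sumr_const_ord; apply: ler_sum => i _.
  by rewrite ler_ln ?posrE ?ratio_ge // (lt_le_trans r_gt0).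
apply: sum_ln_le => [|i|]; first lra.
  exact: lt_le_trans r_gt0 (ratio_ge i).
apply: le_trans (sum_gap_ratio_le a_ge0 D_gt0 L_gt0 sumD) _.
by rewrite ler_wpM2l //; lra.
Qed.

Lemma rate_gap_cvg0 b a (Lf : R -> R) : 1 < b -> 0 <= a ->
  (forall D, 0 < D <= \tr S -> 0 < Lf D /\ \sum_i Num.min (Lf D) (lam i) = D) ->
  (fun D => R_alpha b S a D - R_wf b lam (Lf D)) @ 0^'+ --> 0.
Proof.
move=> b_gt1 a_ge0 Lf_level.
have m_gt0 := lam_min_gt0 lam_gt0; have lnb_gt0 : 0 < ln b by rewrite ln_gt0.
set C := a / (lam_min lam * (2 * ln b)).
apply: (squeeze_cvgr (f := cst 0) (h := fun D => C * D)); last 2 first.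
- exact: (@cvg_cst _ 0).
- by rewrite -[X in _ --> X](mulr0 C); apply: cvgMl_tmp; exact: cvg_within_filter.
near=> D.
have D_gt0 : 0 < D by near: D; exact: nbhs_right_gt.
have D_lt : D < lam_min lam * n.+1%:R by near: D; apply: nbhs_right_lt; rewrite mulr_gt0.
have D_le : D <= \tr S.
  by rewrite (trace_eigen S_eig) (le_trans (ltW D_lt)) ?lam_min_mul_le_sum.
have [L_gt0 sumD] : 0 < Lf D /\ \sum_i Num.min (Lf D) (lam i) = D.
  by apply: Lf_level; rewrite D_gt0 D_le.
rewrite /cst R_alpha_sub_R_wf //.
under eq_bigr => i _ do rewrite (gap_ratio_low a i D_gt0 D_lt sumD).
have term_bounds i : 0 <= ln (1 + a * D / (n.+1%:R * lam i)) <= a * D / (n.+1%:R * lam_min lam).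
  have y_ge0 : 0 <= a * D / (n.+1%:R * lam i) by rewrite divr_ge0 ?mulr_ge0 // ?ltW ?mulr_gt0.
  rewrite ln_ge0 ?lerDl //= (le_trans (le_ln1Dx _)) ?(lt_le_trans _ y_ge0) ?ltrN10 //.
  rewrite ler_wpM2l ?mulr_ge0 ?(ltW D_gt0) // lef_pV2 ?posrE ?mulr_gt0 //.
  by rewrite ler_wpM2l ?lam_min_le.
apply/andP; split.
  by rewrite divr_ge0 ?sumr_ge0 ?mulr_ge0 ?ltW // => i _; case/andP: (term_bounds i).
rewrite ler_pdivrMr ?mulr_gt0 //.
have -> : C * D * (2 * ln b) = \sum_(i < n.+1) (a * D / (n.+1%:R * lam_min lam)).
  by rewrite sumr_const_ord /C; field; rewrite addrC natr1 pnatr_eq0 !gt_eqF.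
by apply: ler_sum => i _; case/andP: (term_bounds i).
Unshelve. all: by end_near.
Qed.
End RateGap.

Theorem theorem2 (R : realType) (b : R) (n : nat) (S : 'M[R]_n.+1)
    (lam : 'I_n.+1 -> R) (Lf : R -> R) (astar : R) :
  1 < b ->
  sym_posdef S ->
  eigenvalues_of S lam ->
  (forall D, 0 < D <= \tr S ->
     0 < Lf D /\ \sum_(i < n.+1) Num.min (Lf D) (lam i) = D) ->
  0 <= astar <= 1 ->
  R_alpha b S astar (\tr S) = 0 ->
  [/\ (fun D => R_alpha b S astar D - R_wf b lam (Lf D)) @ 0^'+ --> 0,
      R_alpha b S astar (\tr S) = 0,
      R_wf b lam (Lf (\tr S)) = 0
    & forall D, 0 < D <= \tr S ->
      1/2 * logb b (lam_min lam / (\tr S / n.+1%:R))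
        <= (R_alpha b S astar D - R_wf b lam (Lf D)) / n.+1%:R
      /\ (R_alpha b S astar D - R_wf b lam (Lf D)) / n.+1%:R
        <= 1/2 * logb b (2 - lam_min lam / (\tr S / n.+1%:R))].
Proof.
move=> b_gt1 S_pd S_eig Lf_level /andP[astar_ge0 _] R_alpha_tr.
have lam_gt0 := posdef_eigen_gt0 S_pd S_eig.
have astar_le := alpha_add_ratio_le S_eig lam_gt0 b_gt1 astar_ge0 R_alpha_tr.
split => //.
- exact: rate_gap_cvg0.
- have tr_range : 0 < \tr S <= \tr S by rewrite (trace_gt0 S_eig lam_gt0) lexx.
  have [_ sum_tr] := Lf_level _ tr_range.
  by apply: (R_wf_full lam_gt0); rewrite sum_tr (trace_eigen S_eig).
- move=> D D_range; have [L_gt0 sumD] := Lf_level D D_range.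
  by case/andP: D_range => D_gt0 _; exact: rate_gap_bounds.
Qed.
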